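(* Let $T>0$. Let $g\in C^1(\mathbb{R})$ be an odd function with $\sup_{x\in\mathbb{R}}|g'(x)|<2/T^2$, and let $k:\mathbb{R}\to\mathbb{R}$ be a continuous, odd, $T$-periodic function with $\frac{1}{T}\int_0^T k(t)\,dt=0$. Then the equation $$u''+g(u)=k(t)$$ has exactly one solution $u\in C^2(\mathbb{R})$ that is odd and $T$-periodic.
   Context: A function $h$ is odd if $h(-x)=-h(x)$ for all $x$. *)

From Stdlib Require Import Reals.
From Coquelicot Require Import Coquelicot.
Open Scope R_scope.

Definition odd_fun (h : R -> R) : Prop := forall x, h (- x) = - h x.

Definition periodic (T : R) (h : R -> R) : Prop := forall x, h (x + T) = h x.

Definition is_C1 (h : R -> R) : Prop :=
  (forall x, ex_derive h x) /\ (forall x, continuous (Derive h) x).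

Definition is_C2 (h : R -> R) : Prop :=
  (forall x, ex_derive h x) /\ (forall x, ex_derive (Derive h) x) /\
  (forall x, continuous (Derive_n h 2) x).

(* Let [S f] be the solution of [w'' = f], [w 0 = w T = 0]. An odd [T]-periodic function
   vanishes at [0] and [T], so the odd periodic solutions of [u'' + g u = k] are exactly the
   fixed points of [u |-> S (k - g o u)] among continuous odd periodic functions, a class that
   [S] preserves. The maximum principle gives [|S f| <= M T^2 / 8] whenever [|f| <= M] on
   [[0, T]], and [g] is [c]-Lipschitz, so this map is a contraction of ratio [c T^2 / 8 < 1/4]
   for the sup distance; the contraction principle yields existence and uniqueness. *)

From Stdlib Require Import Reals Lra FunctionalExtensionality.
From Coquelicot Require Import Coquelicot.
Open Scope R_scope.

Lemma is_derive_continuity_pt (f : R -> R) (x l : R) :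
  is_derive f x l -> continuity_pt f x.
Proof.
  intro Hd; apply continuity_pt_filterlim, (ex_derive_continuous f x); exists l; exact Hd.
Qed.

Lemma MVT_is_derive (f f' : R -> R) (a b : R) : a <= b ->
  (forall x, is_derive f x (f' x)) -> exists c, a <= c <= b /\ f b - f a = f' c * (b - a).
Proof.
  intros Hab Hf; destruct (MVT_gen f a b f') as [c [Hc E]].
  - intros x _; apply Hf.
  - intros x _; apply (is_derive_continuity_pt _ _ _ (Hf x)).
  - rewrite Rmin_left, Rmax_right in Hc by lra; now exists c.
Qed.

Lemma is_derive_0_const (f : R -> R) :
  (forall x, is_derive f x 0) -> forall x y, f x = f y.
Proof.
  intros Hf x y; destruct (Rle_dec x y).
  - destruct (MVT_is_derive f (fun _ => 0) x y) as [c [_ E]]; auto; lra.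
  - destruct (MVT_is_derive f (fun _ => 0) y x) as [c [_ E]]; auto; lra.
Qed.

Lemma Rabs_sub_le_Derive_bound (g : R -> R) (c : R) : (forall x, ex_derive g x) ->
  (forall x, Rabs (Derive g x) <= c) -> forall a b, Rabs (g a - g b) <= c * Rabs (a - b).
Proof.
  intros Hg Hc.
  assert (Hle : forall a b, a <= b -> Rabs (g b - g a) <= c * Rabs (b - a)).
  { intros a b Hab.
    destruct (MVT_is_derive g (Derive g) a b Hab) as [x [_ ->]].
    { intro; apply Derive_correct, Hg. }
    rewrite Rabs_mult; apply Rmult_le_compat_r; [apply Rabs_pos | apply Hc]. }
  intros a b; destruct (Rle_dec b a) as [Hba | Hab].
  - now apply Hle.
  - rewrite Rabs_minus_sym, (Rabs_minus_sym a); apply Hle; lra.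
Qed.

Lemma is_derive_comp_opp (f : R -> R) (x l : R) :
  is_derive f (- x) l -> is_derive (fun t => f (- t)) x (- l).
Proof.
  intro Hf; replace (- l) with (scal (-1) l) by (cbn; unfold mult; cbn; ring).
  apply (is_derive_comp f Ropp); auto; auto_derive; auto.
Qed.

Lemma is_derive_comp_shift (f : R -> R) (x l T : R) :
  is_derive f (x + T) l -> is_derive (fun t => f (t + T)) x l.
Proof.
  intro Hf; replace l with (scal 1 l) by (cbn; unfold mult; cbn; ring).
  apply (is_derive_comp f (fun t => t + T)); auto; auto_derive; auto.
Qed.

Section DeriveSymmetry.

Variables f f' : R -> R.
Hypothesis Hf : forall x, is_derive f x (f' x).

Lemma even_of_odd_derive : odd_fun f' -> forall t, f (- t) = f t.
Proof.
  intros Hodd t.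
  enough (E : f (- t) - f t = f (- 0) - f 0) by (rewrite Ropp_0 in E; lra).
  apply (is_derive_0_const (fun t => f (- t) - f t)); intro x.
  replace 0 with (- f' (- x) - f' x) by (rewrite Hodd; ring).
  apply (is_derive_minus (fun t => f (- t))); [apply is_derive_comp_opp|]; apply Hf.
Qed.

Lemma odd_of_even_derive : (forall t, f' (- t) = f' t) -> f 0 = 0 -> odd_fun f.
Proof.
  intros Heven H0 t.
  enough (E : f (- t) + f t = f (- 0) + f 0) by (rewrite Ropp_0, H0 in E; lra).
  apply (is_derive_0_const (fun t => f (- t) + f t)); intro x.
  replace 0 with (- f' (- x) + f' x) by (rewrite Heven; ring).
  apply (is_derive_plus (fun t => f (- t))); [apply is_derive_comp_opp|]; apply Hf.
Qed.

Lemma shift_sub_of_periodic_derive (T : R) :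
  periodic T f' -> forall t, f (t + T) - f t = f T - f 0.
Proof.
  intros Hper t.
  rewrite <- (Rplus_0_l T) at 2.
  apply (is_derive_0_const (fun t => f (t + T) - f t)); intro x.
  replace 0 with (f' (x + T) - f' x) by (rewrite Hper; ring).
  apply (is_derive_minus (fun t => f (t + T))); [apply is_derive_comp_shift|]; apply Hf.
Qed.

End DeriveSymmetry.

Lemma max_principle (p p' p'' : R -> R) (a b : R) :
  (forall x, is_derive p x (p' x)) -> (forall x, is_derive p' x (p'' x)) ->
  (forall x, a <= x <= b -> 0 <= p'' x) -> p a <= 0 -> p b <= 0 ->
  forall t, a <= t <= b -> p t <= 0.
Proof.
  intros Hp Hp' Hconvex Ha Hb t Ht.
  destruct (Rle_dec (p t) 0) as [|Hpos]; auto; exfalso.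
  assert (a < t < b).
  { split; apply Rnot_le_lt; intro;
      [assert (t = a) by lra | assert (t = b) by lra]; subst; lra. }
  destruct (MVT_is_derive p p' a t) as [x1 [Hx1 E1]]; auto; try lra.
  destruct (MVT_is_derive p p' t b) as [x2 [Hx2 E2]]; auto; try lra.
  assert (p' x1 > 0) by nra; assert (p' x2 < 0) by nra.
  destruct (MVT_is_derive p' p'' x1 x2) as [x3 [Hx3 E3]]; auto; try lra.
  assert (0 <= p'' x3) by (apply Hconvex; lra); nra.
Qed.

Definition antider (f : R -> R) (t : R) : R := RInt f 0 t.

Definition dirichlet_slope (T : R) (f : R -> R) : R := RInt (antider f) 0 T / T.

Definition dirichlet_sol (T : R) (f : R -> R) (t : R) : R :=
  RInt (antider f) 0 t - t * dirichlet_slope T f.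

Lemma is_derive_antider (f : R -> R) :
  (forall t, continuous f t) -> forall t, is_derive (antider f) t (f t).
Proof.
  intros Hf t; apply is_derive_RInt with (a := 0); [|apply Hf].
  apply filter_forall; intro b; apply (RInt_correct f), ex_RInt_continuous; intros; apply Hf.
Qed.

Lemma continuous_antider (f : R -> R) :
  (forall t, continuous f t) -> forall t, continuous (antider f) t.
Proof.
  intros Hf t; apply (ex_derive_continuous (antider f)); exists (f t).
  now apply is_derive_antider.
Qed.

Section DirichletSolution.

Variable T : R.
Hypothesis HT : 0 < T.

Lemma is_derive_dirichlet_sol (f : R -> R) : (forall t, continuous f t) ->
  forall t, is_derive (dirichlet_sol T f) t (antider f t - dirichlet_slope T f).
Proof.
  intros Hf t; apply (is_derive_minus (fun t => RInt (antider f) 0 t)).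
  - apply (is_derive_antider (antider f)), continuous_antider, Hf.
  - auto_derive; [exact I | ring].
Qed.

Lemma is_derive_dirichlet_sol_derive (f : R -> R) : (forall t, continuous f t) ->
  forall t, is_derive (fun t => antider f t - dirichlet_slope T f) t (f t).
Proof.
  intros Hf t; replace (f t) with (minus (f t) 0) by (cbn; unfold minus, plus, opp; cbn; ring).
  apply (is_derive_minus (antider f)); [now apply is_derive_antider | auto_derive; auto].
Qed.

Lemma dirichlet_sol_0 (f : R -> R) : dirichlet_sol T f 0 = 0.
Proof. unfold dirichlet_sol; rewrite RInt_point; cbn; ring. Qed.

Lemma dirichlet_sol_T (f : R -> R) : dirichlet_sol T f T = 0.
Proof. unfold dirichlet_sol, dirichlet_slope; field; lra. Qed.

Lemma is_derive_Derive_dirichlet_sol (f : R -> R) : (forall t, continuous f t) ->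
  forall t, is_derive (Derive (dirichlet_sol T f)) t (f t).
Proof.
  intros Hf t; apply (is_derive_ext (fun t => antider f t - dirichlet_slope T f)).
  - intro x; symmetry; apply is_derive_unique, is_derive_dirichlet_sol, Hf.
  - now apply is_derive_dirichlet_sol_derive.
Qed.

Lemma Derive2_dirichlet_sol (f : R -> R) : (forall t, continuous f t) ->
  forall t, Derive_n (dirichlet_sol T f) 2 t = f t.
Proof. intros Hf t; now apply is_derive_unique, is_derive_Derive_dirichlet_sol. Qed.

Lemma is_C2_dirichlet_sol (f : R -> R) : (forall t, continuous f t) ->
  is_C2 (dirichlet_sol T f).
Proof.
  intro Hf; split; [|split]; intro x.
  - eexists; now apply is_derive_dirichlet_sol.
  - eexists; now apply is_derive_Derive_dirichlet_sol.
  - apply (continuous_ext f); [intro; symmetry; now apply Derive2_dirichlet_sol | apply Hf].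
Qed.


Lemma dirichlet_sol_unique (f w w' : R -> R) : (forall t, continuous f t) ->
  (forall x, is_derive w x (w' x)) -> (forall x, is_derive w' x (f x)) ->
  w 0 = 0 -> w T = 0 -> forall t, w t = dirichlet_sol T f t.
Proof.
  intros Hf Hw Hw' Hw0 HwT t.
  set (d := fun t => w' t - (antider f t - dirichlet_slope T f)).
  assert (Hd : forall x, d x = d 0).
  { intro x; apply is_derive_0_const; intro y.
    replace 0 with (f y - f y) by ring.
    apply (is_derive_minus w'); [apply Hw' | now apply is_derive_dirichlet_sol_derive]. }
  set (a := d 0) in Hd.
  assert (Haffine : forall x, w x - dirichlet_sol T f x - a * x
                             = w 0 - dirichlet_sol T f 0 - a * 0).
  { intro x; apply (is_derive_0_const (fun x => w x - dirichlet_sol T f x - a * x)).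
    intro y; replace 0 with (d y - a * 1) by (rewrite (Hd y); ring).
    apply (is_derive_minus (fun x => w x - dirichlet_sol T f x)).
    - apply (is_derive_minus w); [apply Hw | now apply is_derive_dirichlet_sol].
    - apply is_derive_scal; auto_derive; auto. }
  rewrite Hw0, dirichlet_sol_0 in Haffine.
  assert (Ha0 : a = 0) by (specialize (Haffine T); rewrite HwT, dirichlet_sol_T in Haffine; nra).
  specialize (Haffine t); rewrite Ha0 in Haffine; lra.
Qed.

Lemma dirichlet_sol_sub (f1 f2 : R -> R) :
  (forall t, continuous f1 t) -> (forall t, continuous f2 t) -> forall t,
  dirichlet_sol T f1 t - dirichlet_sol T f2 t = dirichlet_sol T (fun s => f1 s - f2 s) t.
Proof.
  intros Hf1 Hf2.
  apply (dirichlet_sol_unique _ _ (fun t => (antider f1 t - dirichlet_slope T f1)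
                                           - (antider f2 t - dirichlet_slope T f2))).
  - intro t; now apply (continuous_minus f1 f2).
  - intro x; apply (is_derive_minus (dirichlet_sol T f1)); now apply is_derive_dirichlet_sol.
  - intro x; apply (is_derive_minus (fun t => antider f1 t - dirichlet_slope T f1));
      now apply is_derive_dirichlet_sol_derive.
  - rewrite !dirichlet_sol_0; ring.
  - rewrite !dirichlet_sol_T; ring.
Qed.

Lemma Rabs_dirichlet_sol_le (f : R -> R) (M : R) : (forall t, continuous f t) ->
  (forall x, 0 <= x <= T -> Rabs (f x) <= M) ->
  forall t, 0 <= t <= T -> Rabs (dirichlet_sol T f t) <= M * T ^ 2 / 8.
Proof.
  intros Hf HM t Ht.
  assert (M0 : 0 <= M) by (specialize (HM 0 ltac:(lra)); pose proof (Rabs_pos (f 0)); lra).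
  (* Compare [+- S f] with the barrier [M t (T - t) / 2], whose second derivative is [-M]. *)
  assert (Hbarrier : forall s, s = 1 \/ s = -1 ->
                       s * dirichlet_sol T f t <= M * t * (T - t) / 2).
  { intros s Hs.
    enough (s * dirichlet_sol T f t - M * t * (T - t) / 2 <= 0) by lra.
    apply (max_principle (fun t => s * dirichlet_sol T f t - M * t * (T - t) / 2)
             (fun t => s * (antider f t - dirichlet_slope T f) - M * (T - 2 * t) / 2)
             (fun t => s * f t - - M) 0 T); auto.
    - intro x; apply (is_derive_minus (fun t => s * dirichlet_sol T f t)).
      + now apply is_derive_scal, is_derive_dirichlet_sol.
      + auto_derive; [exact I | field].
    - intro x; apply (is_derive_minus (fun t => s * (antider f t - dirichlet_slope T f))).
      + now apply is_derive_scal, is_derive_dirichlet_sol_derive.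
      + auto_derive; [exact I | field].
    - intros x Hx; specialize (HM x Hx); apply Rabs_le_between in HM.
      destruct Hs as [-> | ->]; lra.
    - rewrite dirichlet_sol_0; lra.
    - rewrite dirichlet_sol_T; lra. }
  assert (M * t * (T - t) / 2 <= M * T ^ 2 / 8).
  { assert (t * (T - t) <= T ^ 2 / 4) by (pose proof (pow2_ge_0 (T - 2 * t)); nra); nra. }
  pose proof (Hbarrier 1 (or_introl eq_refl)); pose proof (Hbarrier (-1) (or_intror eq_refl)).
  apply Rabs_le; lra.
Qed.

Lemma dirichlet_sol_odd_periodic (f : R -> R) : (forall t, continuous f t) ->
  odd_fun f -> periodic T f -> odd_fun (dirichlet_sol T f) /\ periodic T (dirichlet_sol T f).
Proof.
  intros Hf Hodd Hper.
  assert (HA := is_derive_antider f Hf).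
  assert (HAeven := even_of_odd_derive _ _ HA Hodd).
  (* By evenness, [antider f T - antider f 0 = antider f (T/2) - antider f (-T/2) = 0]. *)
  assert (HAper : periodic T (antider f)).
  { intro t; pose proof (shift_sub_of_periodic_derive _ _ HA T Hper t).
    pose proof (shift_sub_of_periodic_derive _ _ HA T Hper (- (T / 2))) as Ehalf.
    rewrite HAeven in Ehalf; replace (- (T / 2) + T) with (T / 2) in Ehalf by field; lra. }
  assert (HS := is_derive_dirichlet_sol f Hf).
  split.
  - apply (odd_of_even_derive _ _ HS); [intro; now rewrite HAeven | apply dirichlet_sol_0].
  - intro t; assert (E := shift_sub_of_periodic_derive _ _ HS T).
    rewrite dirichlet_sol_0, dirichlet_sol_T in E.
    specialize (E ltac:(intro x; now rewrite HAper) t); lra.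
Qed.

End DirichletSolution.

Lemma periodic_IZR (T : R) (h : R -> R) :
  periodic T h -> forall (n : Z) x, h (x + IZR n * T) = h x.
Proof.
  intros Hper n; induction n as [|n IH|n IH] using Z.peano_ind; intro x.
  - f_equal; ring.
  - rewrite succ_IZR, <- (IH x), <- (Hper (x + IZR n * T)); f_equal; ring.
  - rewrite <- (IH x), <- (Hper (x + IZR (Z.pred n) * T)), <- Z.sub_1_r, minus_IZR.
    f_equal; ring.
Qed.

Lemma periodic_Rabs_le (T : R) (h : R -> R) (M : R) : 0 < T -> periodic T h ->
  (forall t, 0 <= t <= T -> Rabs (h t) <= M) -> forall t, Rabs (h t) <= M.
Proof.
  intros HT Hper HM t.
  set (n := Int_part (t / T)).
  destruct (base_Int_part (t / T)) as [Hlo Hhi]; fold n in Hlo, Hhi.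
  replace t with ((t - IZR n * T) + IZR n * T) by ring.
  rewrite periodic_IZR by exact Hper.
  apply HM; split.
  - enough (IZR n * T <= t / T * T) by (replace (t / T * T) with t in * by (field; lra); lra).
    apply Rmult_le_compat_r; lra.
  - enough (t / T * T <= (IZR n + 1) * T) by (replace (t / T * T) with t in * by (field; lra); lra).
    apply Rmult_le_compat_r; lra.
Qed.

Lemma periodic_bounded (T : R) (h : R -> R) : 0 < T ->
  (forall t, continuous h t) -> periodic T h -> exists M, forall t, Rabs (h t) <= M.
Proof.
  intros HT Hh Hper.
  destruct (continuity_ab_maj (fun x => Rabs (h x)) 0 T) as [tmax [Hmax _]]; [lra| |].
  - intros c _; apply continuity_pt_filterlim, continuous_Rabs_comp, Hh.
  - exists (Rabs (h tmax)); now apply (periodic_Rabs_le T).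
Qed.

Lemma Rabs_le_lim0_eq0 (x : R) (a : nat -> R) :
  is_lim_seq a 0 -> (forall n, Rabs x <= a n) -> x = 0.
Proof.
  intros Ha Hx.
  assert (Hle := is_lim_seq_le (fun _ => Rabs x) a (Rabs x) 0).
  cbn in Hle; specialize (Hle Hx (is_lim_seq_const _) Ha).
  pose proof (Rabs_pos x); apply Rabs_eq_0; lra.
Qed.

Lemma is_lim_seq_Rabs_sub_le (u : nat -> R) (l y M : R) (N : nat) :
  is_lim_seq u l -> (forall n, (N <= n)%nat -> Rabs (u n - y) <= M) -> Rabs (l - y) <= M.
Proof.
  intros Hu HM.
  apply (is_lim_seq_le_loc (fun n => Rabs (u n - y)) (fun _ => M) (Rabs (l - y)) M).
  - now exists N.
  - apply (is_lim_seq_abs (fun n => u n - y) (l - y)).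
    apply is_lim_seq_minus'; [exact Hu | apply is_lim_seq_const].
  - apply is_lim_seq_const.
Qed.

Lemma uniform_cauchy_lim (u : nat -> R -> R) (a : nat -> R) : is_lim_seq a 0 ->
  (forall n m t, (n <= m)%nat -> Rabs (u m t - u n t) <= a n) ->
  exists U, forall n t, Rabs (U t - u n t) <= a n.
Proof.
  intros Ha Hcauchy.
  assert (Hlim : forall t, ex_finite_lim_seq (fun n => u n t)).
  { intro t; apply ex_lim_seq_cauchy_corr; intro eps.
    assert (Heps : 0 < eps / 2) by (destruct eps; cbn; lra).
    destruct (proj2 (is_lim_seq_spec a 0) Ha (mkposreal _ Heps)) as [N HN].
    exists N; intros n m Hn Hm.
    specialize (HN N (le_n N)); cbn in HN; rewrite Rminus_0_r in HN.
    apply Rabs_lt_between in HN.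
    replace (u n t - u m t) with ((u n t - u N t) - (u m t - u N t)) by ring.
    eapply Rle_lt_trans; [apply Rabs_triang|]; rewrite Rabs_Ropp.
    pose proof (Hcauchy N n t Hn); pose proof (Hcauchy N m t Hm); lra. }
  exists (fun t => real (Lim_seq (fun n => u n t))); intros n t.
  destruct (Hlim t) as [l Hl]; rewrite (is_lim_seq_unique _ _ Hl).
  apply (is_lim_seq_Rabs_sub_le (fun m => u m t) l (u n t) (a n) n Hl).
  intros m Hm; now apply Hcauchy.
Qed.

Section ContractionFixedPoint.

Variable Q : (R -> R) -> Prop.
Variable F : (R -> R) -> R -> R.
Variable q : R.
Hypothesis Hq : 0 <= q < 1.
Hypothesis HFQ : forall u, Q u -> Q (F u).
Hypothesis HF_contract : forall u v D, Q u -> Q v ->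
  (forall t, Rabs (u t - v t) <= D) -> forall t, Rabs (F u t - F v t) <= q * D.
Hypothesis HQ_bounded : forall u v, Q u -> Q v -> exists D, forall t, Rabs (u t - v t) <= D.
Hypothesis HQ_closed : forall (u : nat -> R -> R) (U : R -> R) (a : nat -> R),
  (forall n, Q (u n)) -> is_lim_seq a 0 -> (forall n t, Rabs (U t - u n t) <= a n) -> Q U.

Lemma is_lim_seq_geom_scal (D : R) : is_lim_seq (fun n => q ^ n * D) 0.
Proof.
  replace (Finite 0) with (Rbar_mult 0 D) by (cbn; f_equal; ring).
  apply is_lim_seq_scal_r, is_lim_seq_geom; rewrite Rabs_pos_eq; lra.
Qed.

Lemma Q_iter (u : R -> R) : Q u -> forall n, Q (Nat.iter n F u).
Proof. intros Hu n; induction n; [exact Hu | rewrite Nat.iter_succ; now apply HFQ]. Qed.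

Lemma Rabs_iter_sub_le (u v : R -> R) (D : R) : Q u -> Q v ->
  (forall t, Rabs (u t - v t) <= D) ->
  forall n t, Rabs (Nat.iter n F u t - Nat.iter n F v t) <= q ^ n * D.
Proof.
  intros Hu Hv HD n; induction n as [|n IH]; intro t.
  - rewrite pow_O, Rmult_1_l; apply HD.
  - rewrite !Nat.iter_succ; change (q ^ S n) with (q * q ^ n); rewrite Rmult_assoc.
    apply HF_contract; [now apply Q_iter .. | exact IH].
Qed.

Lemma contraction_fixed_point_unique (U V : R -> R) :
  Q U -> Q V -> F U = U -> F V = V -> U = V.
Proof.
  intros HU HV HFU HFV; destruct (HQ_bounded U V HU HV) as [D HD].
  assert (Hn : forall n t, Rabs (U t - V t) <= q ^ n * D).
  { intro n; induction n as [|n IH]; intro t.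
    - rewrite pow_O, Rmult_1_l; apply HD.
    - rewrite <- HFU, <- HFV; change (q ^ S n) with (q * q ^ n); rewrite Rmult_assoc.
      now apply HF_contract. }
  apply functional_extensionality; intro t.
  enough (U t - V t = 0) by lra.
  apply (Rabs_le_lim0_eq0 _ (fun n => q ^ n * D)); [apply is_lim_seq_geom_scal|].
  intro n; apply Hn.
Qed.

Lemma iter_uniform_cauchy (u0 : R -> R) : Q u0 -> exists K, 0 <= K /\
  forall n m t, (n <= m)%nat -> Rabs (Nat.iter m F u0 t - Nat.iter n F u0 t) <= q ^ n * K.
Proof.
  intro Hu0; set (u := fun n => Nat.iter n F u0).
  destruct (HQ_bounded (F u0) u0 (HFQ _ Hu0) Hu0) as [B HB].
  assert (B0 : 0 <= B) by (specialize (HB 0); pose proof (Rabs_pos (F u0 0 - u0 0)); lra).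
  set (K := B / (1 - q)).
  assert (K0 : 0 <= K) by (apply Rdiv_le_0_compat; lra).
  (* Telescoping the steps [q ^ j * B = (q ^ j - q ^ S j) * K]. *)
  assert (Htele : forall n m t, (n <= m)%nat -> Rabs (u m t - u n t) <= (q ^ n - q ^ m) * K).
  { intros n m t Hnm; induction Hnm as [|m Hnm IH].
    - unfold Rminus; rewrite !Rplus_opp_r, Rabs_R0; lra.
    - replace (u (S m) t - u n t) with ((u (S m) t - u m t) + (u m t - u n t)) by ring.
      eapply Rle_trans; [apply Rabs_triang|].
      assert (Hstep : Rabs (u (S m) t - u m t) <= q ^ m * B).
      { unfold u; rewrite Nat.iter_succ_r.
        apply Rabs_iter_sub_le; auto; now apply HFQ. }
      replace ((q ^ n - q ^ S m) * K) with ((q ^ n - q ^ m) * K + q ^ m * B)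
        by (unfold K; cbn [pow]; field; lra).
      lra. }
  exists K; split; [exact K0|]; intros n m t Hnm.
  eapply Rle_trans; [now apply Htele|].
  assert (0 <= q ^ m * K) by (apply Rmult_le_pos; [apply pow_le|]; lra); lra.
Qed.

Lemma contraction_fixed_point_exists (u0 : R -> R) : Q u0 -> exists U, Q U /\ F U = U.
Proof.
  intro Hu0; set (u := fun n => Nat.iter n F u0).
  assert (Hu : forall n, Q (u n)) by (now apply Q_iter).
  destruct (iter_uniform_cauchy u0 Hu0) as [K [K0 Hcauchy]].
  destruct (uniform_cauchy_lim u (fun n => q ^ n * K)) as [U HU];
    [apply is_lim_seq_geom_scal | exact Hcauchy |].
  assert (HQU : Q U) by (apply (HQ_closed u U (fun n => q ^ n * K)); auto; apply is_lim_seq_geom_scal).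
  exists U; split; [exact HQU|].
  apply functional_extensionality; intro t.
  enough (F U t - U t = 0) by lra.
  apply (Rabs_le_lim0_eq0 _ (fun n => q ^ n * (2 * q * K))); [apply is_lim_seq_geom_scal|].
  intro n.
  replace (F U t - U t) with ((F U t - F (u n) t) - (U t - u (S n) t))
    by (unfold u; rewrite Nat.iter_succ; ring).
  eapply Rle_trans; [apply Rabs_triang|]; rewrite Rabs_Ropp.
  pose proof (HF_contract U (u n) (q ^ n * K) HQU (Hu n) (HU n) t).
  pose proof (HU (S n) t); cbn [pow] in *; lra.
Qed.

End ContractionFixedPoint.

Definition cont_odd_periodic (T : R) (u : R -> R) : Prop :=
  (forall t, continuous u t) /\ odd_fun u /\ periodic T u.

Lemma odd_fun_0 (u : R -> R) : odd_fun u -> u 0 = 0.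
Proof. intro Hodd; pose proof (Hodd 0) as E; rewrite Ropp_0 in E; lra. Qed.

Lemma cont_odd_periodic_0 (T : R) : cont_odd_periodic T (fun _ => 0).
Proof. split; [intro; apply continuous_const | split; intro; cbn; lra]. Qed.

Lemma cont_odd_periodic_bounded_sub (T : R) (u v : R -> R) : 0 < T ->
  cont_odd_periodic T u -> cont_odd_periodic T v -> exists D, forall t, Rabs (u t - v t) <= D.
Proof.
  intros HT [Hu [_ Huper]] [Hv [_ Hvper]].
  apply (periodic_bounded T); auto.
  - intro t; now apply (continuous_minus u v).
  - intro t; now rewrite Huper, Hvper.
Qed.

Lemma cont_odd_periodic_uniform_lim (T : R) (u : nat -> R -> R) (U : R -> R) (a : nat -> R) :
  (forall n, cont_odd_periodic T (u n)) -> is_lim_seq a 0 ->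
  (forall n t, Rabs (U t - u n t) <= a n) -> cont_odd_periodic T U.
Proof.
  intros Hu Ha HU.
  assert (Ha2 : is_lim_seq (fun n => a n + a n) 0).
  { replace (Finite 0) with (Finite (0 + 0)) by (f_equal; ring); now apply is_lim_seq_plus'. }
  split; [|split].
  - intro x; apply continuity_pt_filterlim.
    apply (CVU_continuity u U x (mkposreal 1 Rlt_0_1)); [|intros n y _|apply Boule_center].
    + intros eps Heps.
      destruct (proj2 (is_lim_seq_spec a 0) Ha (mkposreal eps Heps)) as [N HN].
      exists N; intros n y Hn _; specialize (HN n Hn); cbn in HN.
      rewrite Rminus_0_r in HN; eapply Rle_lt_trans; [apply HU|].
      eapply Rle_lt_trans; [apply Rle_abs | exact HN].
    + destruct (Hu n) as [Hc _]; apply continuity_pt_filterlim, Hc.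
  - intro t; enough (U (- t) + U t = 0) by lra.
    apply (Rabs_le_lim0_eq0 _ _ Ha2); intro n.
    destruct (Hu n) as [_ [Hodd _]].
    replace (U (- t) + U t) with ((U (- t) - u n (- t)) + (U t - u n t)) by (rewrite Hodd; ring).
    eapply Rle_trans; [apply Rabs_triang|]; now apply Rplus_le_compat.
  - intro t; enough (U (t + T) - U t = 0) by lra.
    apply (Rabs_le_lim0_eq0 _ _ Ha2); intro n.
    destruct (Hu n) as [_ [_ Hper]].
    replace (U (t + T) - U t) with ((U (t + T) - u n (t + T)) - (U t - u n t)) by (rewrite Hper; ring).
    eapply Rle_trans; [apply Rabs_triang|]; rewrite Rabs_Ropp; now apply Rplus_le_compat.
Qed.

Definition picard_map (T : R) (k g u : R -> R) : R -> R :=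
  dirichlet_sol T (fun t => k t - g (u t)).

Section PicardMap.

Variables (T c : R) (k g : R -> R).
Hypothesis HT : 0 < T.
Hypothesis Hg : forall x, ex_derive g x.
Hypothesis Hgodd : odd_fun g.
Hypothesis Hgc : forall x, Rabs (Derive g x) <= c.
Hypothesis Hk : forall t, continuous k t.
Hypothesis Hkodd : odd_fun k.
Hypothesis Hkper : periodic T k.

Lemma continuous_forcing (u : R -> R) :
  (forall t, continuous u t) -> forall t, continuous (fun t => k t - g (u t)) t.
Proof.
  intros Hu t; apply (continuous_minus k); [apply Hk|].
  apply (continuous_comp u g); [apply Hu | apply (ex_derive_continuous g), Hg].
Qed.

Lemma cont_odd_periodic_picard_map (u : R -> R) :
  cont_odd_periodic T u -> cont_odd_periodic T (picard_map T k g u).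
Proof.
  intros [Hu [Huodd Huper]].
  assert (Hf := continuous_forcing u Hu).
  destruct (dirichlet_sol_odd_periodic T HT _ Hf) as [Hodd Hper].
  - intro t; rewrite Hkodd, Huodd, Hgodd; ring.
  - intro t; now rewrite Hkper, Huper.
  - split; [|now split].
    intro t; apply (ex_derive_continuous (picard_map T k g u)); eexists.
    now apply is_derive_dirichlet_sol.
Qed.

Lemma picard_map_contract (u v : R -> R) (D : R) :
  cont_odd_periodic T u -> cont_odd_periodic T v -> (forall t, Rabs (u t - v t) <= D) ->
  forall t, Rabs (picard_map T k g u t - picard_map T k g v t) <= (c * T ^ 2 / 8) * D.
Proof.
  intros Hu Hv HD.
  assert (c0 : 0 <= c) by (pose proof (Hgc 0); pose proof (Rabs_pos (Derive g 0)); lra).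
  destruct (cont_odd_periodic_picard_map u Hu) as [_ [_ HFuper]].
  destruct (cont_odd_periodic_picard_map v Hv) as [_ [_ HFvper]].
  destruct Hu as [Hu _], Hv as [Hv _].
  apply (periodic_Rabs_le T); auto; [intro t; now rewrite HFuper, HFvper|].
  intros t Ht; unfold picard_map.
  rewrite dirichlet_sol_sub by auto using continuous_forcing.
  replace (c * T ^ 2 / 8 * D) with ((c * D) * T ^ 2 / 8) by field.
  apply Rabs_dirichlet_sol_le; auto.
  - intro x; apply (continuous_minus (fun t => k t - g (u t))); now apply continuous_forcing.
  - intros x _; replace (k x - g (u x) - (k x - g (v x))) with (g (v x) - g (u x)) by ring.
    eapply Rle_trans; [now apply (Rabs_sub_le_Derive_bound g c)|].
    rewrite Rabs_minus_sym; now apply Rmult_le_compat_l.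
Qed.

Lemma picard_map_fixed_of_solution (v : R -> R) : is_C2 v -> odd_fun v -> periodic T v ->
  (forall t, Derive_n v 2 t + g (v t) = k t) -> picard_map T k g v = v.
Proof.
  intros [Hv1 [Hv2 _]] Hvodd Hvper Heq.
  assert (Hv0 := odd_fun_0 v Hvodd).
  apply functional_extensionality; intro t; symmetry.
  apply (dirichlet_sol_unique T HT _ _ (Derive v)).
  - apply continuous_forcing; intro x; apply (ex_derive_continuous v), Hv1.
  - intro x; now apply Derive_correct.
  - intro x; replace (k x - g (v x)) with (Derive_n v 2 x) by (rewrite <- (Heq x); ring).
    now apply Derive_correct.
  - exact Hv0.
  - rewrite <- (Rplus_0_l T), Hvper; exact Hv0.
Qed.

Lemma solution_of_picard_map_fixed (U : R -> R) :
  cont_odd_periodic T U -> picard_map T k g U = U ->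
  is_C2 U /\ odd_fun U /\ periodic T U /\ forall t, Derive_n U 2 t + g (U t) = k t.
Proof.
  intros [HU [HUodd HUper]] HFU.
  assert (Hf := continuous_forcing U HU).
  split; [rewrite <- HFU; now apply is_C2_dirichlet_sol|].
  do 2 (split; [assumption|]).
  intro t; rewrite <- HFU at 1; unfold picard_map.
  rewrite Derive2_dirichlet_sol by auto; ring.
Qed.

End PicardMap.

Theorem theorem2 (T : R) (g k : R -> R) :
  0 < T ->
  is_C1 g -> odd_fun g ->
  (exists c, c < 2 / T ^ 2 /\ forall x, Rabs (Derive g x) <= c) ->
  (forall t, continuous k t) -> odd_fun k -> periodic T k ->
  / T * RInt k 0 T = 0 ->
  exists! u : R -> R,
    is_C2 u /\ odd_fun u /\ periodic T u /\
    forall t, Derive_n u 2 t + g (u t) = k t.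
Proof.
  intros HT [Hg _] Hgodd [c [Hc Hgc]] Hk Hkodd Hkper _.
  assert (Hq : 0 <= c * T ^ 2 / 8 < 1).
  { assert (c0 : 0 <= c) by (pose proof (Hgc 0); pose proof (Rabs_pos (Derive g 0)); lra).
    assert (HT2 : 0 < T ^ 2) by (apply pow_lt; lra).
    apply (Rmult_lt_compat_r (T ^ 2)) in Hc; [|exact HT2].
    replace (2 / T ^ 2 * T ^ 2) with 2 in Hc by (field; lra).
    split; nra. }
  assert (HQ := cont_odd_periodic_picard_map T k g HT Hg Hgodd Hk Hkodd Hkper).
  assert (Hcontract := picard_map_contract T c k g HT Hg Hgodd Hgc Hk Hkodd Hkper).
  assert (Hbounded := fun u v => cont_odd_periodic_bounded_sub T u v HT).
  assert (Hclosed := cont_odd_periodic_uniform_lim T).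
  destruct (contraction_fixed_point_exists _ _ _ Hq HQ Hcontract Hbounded Hclosed
              (fun _ => 0) (cont_odd_periodic_0 T)) as [U [HQU HFU]].
  exists U; split; [now apply solution_of_picard_map_fixed|].
  intros v [Hv2 [Hvodd [Hvper Heq]]].
  assert (Hfixv := picard_map_fixed_of_solution T k g HT Hg Hk v Hv2 Hvodd Hvper Heq).
  apply (contraction_fixed_point_unique _ _ _ Hq Hcontract Hbounded); auto.
  split; [intro t; apply (ex_derive_continuous v), (proj1 Hv2) | now split].
Qed.
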